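(* Let $G$ be a $d$-regular graph with a vertex $u$. The vertices $(0,u)$ and $(1,u)$ are strongly cospectral (with respect to the Laplacian) in $\uparrow^{2}G$ if and only if $d\notin\sigma_u(G)$. In particular, for any vertex $u$, the vertices $(0,u)$ and $(1,u)$ are strongly cospectral in: (i) $\uparrow^{2}K_{d+1}$ for all $d\geq 1$; (ii) $\uparrow^{2}C_n$ if and only if $n\not\equiv 0 \pmod 4$; (iii) $\uparrow^{2}Q_d$ if and only if $d$ is odd.
   Context: All graphs are simple, undirected and unweighted. For a graph $X$ with Laplacian $L=D-A$, spectral decomposition $L=\sum_\lambda \lambda E_\lambda$ over its distinct eigenvalues ($E_\lambda$ orthogonal eigenprojections), the eigenvalue support of a vertex $u$ is $\sigma_u(X)=\{\lambda:E_\lambda\mathbf{e}_u\neq\mathbf{0}\}$; vertices $u,v$ are strongly cospectral if $E_\lambda\mathbf{e}_u=\pm E_\lambda\mathbf{e}_v$ for all $\lambda\in\sigma_u(X)$. The blow-up $\uparrow^{2}G$ has vertex set $\mathbb{Z}_2\times V(G)$, with $(l,u)\sim(m,v)$ iff $u\sim v$ in $G$. $K_n$ is the complete graph, $C_n$ the $n$-cycle, $Q_d$ the $d$-dimensional hypercube. *)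

From HB Require Import structures.
From mathcomp Require Import all_boot all_order all_algebra.
Set Implicit Arguments. Unset Strict Implicit. Unset Printing Implicit Defensive.
Import Order.TTheory GRing.Theory Num.Theory.
Local Open Scope ring_scope.

Definition simple_graph (T : finType) (e : rel T) : Prop :=
  symmetric e /\ irreflexive e.

Definition deg (T : finType) (e : rel T) (u : T) : nat := #|[set v | e u v]|.

Definition regular (T : finType) (e : rel T) (d : nat) : Prop :=
  forall u, deg e u = d.

Definition laplacian (R : nzRingType) (T : finType) (e : rel T) : 'M[R]_#|T| :=
  \matrix_(i, j)
    (if enum_val i == enum_val j then (deg e (enum_val i))%:R
     else if e (enum_val i) (enum_val j) then -1 else 0).

Definition orth_proj (R : fieldType) (m n : nat) (B : 'M[R]_(m, n)) : 'M[R]_n :=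
  let Bb := row_base B in (Bb^T *m invmx (Bb *m Bb^T)) *m Bb.

(* E_lambda : orthogonal projection onto the lambda-eigenspace of L
   (the zero matrix when lambda is not an eigenvalue). *)
Definition eigproj (R : fieldType) (n : nat) (L : 'M[R]_n) (lam : R) : 'M[R]_n :=
  orth_proj (eigenspace L lam).

Definition evec (R : nzRingType) (T : finType) (u : T) : 'cV[R]_#|T| :=
  \col_i (enum_val i == u)%:R.

Definition eig_support (R : fieldType) (T : finType) (e : rel T) (u : T) (lam : R) : Prop :=
  eigproj (laplacian R e) lam *m evec R u != 0.

Definition strongly_cospectral (R : fieldType) (T : finType) (e : rel T) (u v : T) : Prop :=
  forall lam : R, eig_support e u lam ->
    (eigproj (laplacian R e) lam *m evec R u = eigproj (laplacian R e) lam *m evec R v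
     \/ eigproj (laplacian R e) lam *m evec R u = - (eigproj (laplacian R e) lam *m evec R v)).

Definition blowup2 (T : finType) (e : rel T) : rel ('I_2 * T) :=
  fun x y => e x.2 y.2.

Definition z0 : 'I_2 := @Ordinal 2 0 isT.
Definition z1 : 'I_2 := @Ordinal 2 1 isT.

Definition complete_graph (n : nat) : rel 'I_n := fun i j => i != j.

Definition cycle_graph (n : nat) : rel 'I_n :=
  fun i j => ((val j == (val i).+1 %% n) || (val i == (val j).+1 %% n))%N.

Definition hypercube (d : nat) : rel {ffun 'I_d -> bool} :=
  fun f g => #|[set i | f i != g i]| == 1%N.

From mathcomp Require Import all_boot all_order all_algebra.
From mathcomp Require Import lra zify.
Set Implicit Arguments. Unset Strict Implicit. Unset Printing Implicit Defensive.
Import Order.TTheory GRing.Theory Num.Theory.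
Local Open Scope ring_scope.

(* Let [a = (0, u)] and [b = (1, u)] in the blow-up of a [d]-regular graph [G],
   with Laplacian eigenprojections [E_lam].  Since [e_a - e_b] is a Laplacian
   eigenvector for [2 d], [E_lam e_a = E_lam e_b] for [lam <> 2 d], whereas
   [E_(2d) e_a - E_(2d) e_b = e_a - e_b <> 0]; so [a] and [b] are strongly
   cospectral iff [E_(2d) (e_a + e_b) = 0], i.e. iff every [2 d]-eigenvector of
   the blow-up takes opposite values at [a] and [b].  Adding up the two copies,
   these eigenvectors correspond to the [g] on [G] with [A g = 0], which by
   regularity are the [d]-eigenvectors of [L(G)]; so the condition says that
   all of them vanish at [u], i.e. that [d] is not in the support of [u]. *)

Lemma mulmx_eq0_rowspace (F : fieldType) m n (B : 'M[F]_(m, n)) (x : 'cV[F]_n) :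
  B *m x = 0 <-> forall w : 'rV_n, (w <= B)%MS -> w *m x = 0.
Proof.
split=> [Bx w /submxP [D ->] | wx]; first by rewrite -mulmxA Bx mulmx0.
by apply/row_matrixP => i; rewrite row_mul row0; apply: wx; exact: row_sub.
Qed.

Section OrthProj.
Variable R : realFieldType.

Lemma rV_mul_tr_eq0 k (v : 'rV[R]_k) : v *m v^T = 0 -> v = 0.
Proof.
move=> /matrixP/(_ 0 0); rewrite !mxE => sum_sq0.
apply/matrixP => i j; rewrite (ord1 i) mxE.
have /(_ j isT) : forall j0 : 'I_k, true -> v 0 j0 * v^T j0 0 = 0.
  by apply: psumr_eq0P sum_sq0 => j0 _; rewrite mxE -expr2 sqr_ge0.
by rewrite mxE => /eqP; rewrite mulf_eq0 orbb => /eqP.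
Qed.

Lemma row_free_gram_unitmx m n (B : 'M[R]_(m, n)) :
  row_free B -> B *m B^T \in unitmx.
Proof.
move=> freeB; rewrite -row_free_unit -kermx_eq0 -submx0; apply/row_subP => i.
set c := row i (kermx (B *m B^T)).
have cBBt : c *m (B *m B^T) = 0 by apply/sub_kermxP; exact: row_sub.
have cB : c *m B = 0.
  by apply: rV_mul_tr_eq0; rewrite trmx_mul mulmxA -(mulmxA c B) cBBt mul0mx.
have : (c <= kermx B)%MS by apply/sub_kermxP.
by move: freeB; rewrite -kermx_eq0 => /eqP ->.
Qed.

Lemma orth_proj_mul_eq0 m n (B : 'M[R]_(m, n)) (x : 'cV[R]_n) :
  orth_proj B *m x = 0 <-> B *m x = 0.
Proof.
rewrite /orth_proj; set Bb := row_base B.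
have Bb_unit : Bb *m Bb^T \in unitmx := row_free_gram_unitmx (row_base_free B).
have /submxP [C BC] : (B <= Bb)%MS by rewrite eq_row_base.
have /submxP [D BbD] : (Bb <= B)%MS by rewrite eq_row_base.
clearbody Bb; split=> [Px | ].
- suff Bbx : Bb *m x = 0 by rewrite BC -mulmxA Bbx mulmx0.
  have := congr1 (mulmx Bb) Px; rewrite mulmx0 !mulmxA.
  by rewrite mulmxV // mul1mx.
- by rewrite BbD -!mulmxA => ->; rewrite !mulmx0.
Qed.

Lemma orth_proj_mul_id m n (B : 'M[R]_(m, n)) (x : 'cV[R]_n) :
  (x^T <= B)%MS -> orth_proj B *m x = x.
Proof.
rewrite /orth_proj; set Bb := row_base B => xB.
have Bb_unit : Bb *m Bb^T \in unitmx := row_free_gram_unitmx (row_base_free B).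
have /submxP [c xc] : (x^T <= Bb)%MS by rewrite eq_row_base.
clearbody Bb; have -> : x = Bb^T *m c^T by rewrite -trmx_mul -xc trmxK.
by rewrite -!mulmxA (mulmxA Bb) (mulmxA (invmx _)) mulVmx // mul1mx.
Qed.

Lemma eigproj_mul_eigvec n (L : 'M[R]_n) (z : 'cV_n) lam mu :
  L^T = L -> L *m z = mu *: z ->
  eigproj L lam *m z = if lam == mu then z else 0.
Proof.
move=> L_sym Lz; case: eqP => [-> | /eqP lam_mu].
  by apply: orth_proj_mul_id; apply/eigenspaceP; rewrite -{1}L_sym -trmx_mul Lz linearZ.
rewrite /eigproj orth_proj_mul_eq0 mulmx_eq0_rowspace => w /eigenspaceP wL.
have : w *m L *m z = w *m (L *m z) by rewrite mulmxA.
rewrite wL Lz -scalemxAl -scalemxAr => /eqP; rewrite -subr_eq0 -scalerBl.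
by rewrite scaler_eq0 subr_eq0 (negbTE lam_mu) => /eqP.
Qed.

End OrthProj.

Section Laplacian.
Variables (R : realFieldType) (T : finType) (e : rel T).
Hypothesis e_simple : simple_graph e.

Definition lap_eigfun (lam : R) (g : T -> R) :=
  forall y, (deg e y)%:R * g y - \sum_(x | e y x) g x = lam * g y.

Lemma lap_eigfun_ext lam g1 g2 : g1 =1 g2 -> lap_eigfun lam g1 -> lap_eigfun lam g2.
Proof.
move=> g12 g1_eig y; rewrite -g12 -(g1_eig y).
by congr (_ - _); apply: eq_bigr => x _; rewrite g12.
Qed.

Definition rV_fun (w : 'rV[R]_#|T|) (x : T) : R := w 0 (enum_rank x).

Lemma laplacian_sym : (laplacian R e)^T = laplacian R e.
Proof.
case: e_simple => e_sym _; apply/matrixP => i j; rewrite !mxE eq_sym e_sym.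
by case: eqP => // ->.
Qed.

Lemma sum_enum_val (F : T -> R) : \sum_(i < #|T|) F (enum_val i) = \sum_x F x.
Proof.
rewrite (reindex (@enum_val T T)) //=.
by exists enum_rank => x _; [exact: enum_valK | exact: enum_rankK].
Qed.

Lemma row_mul_laplacian (w : 'rV[R]_#|T|) y :
  (w *m laplacian R e) 0 (enum_rank y) =
  (deg e y)%:R * rV_fun w y - \sum_(x | e y x) rV_fun w x.
Proof.
case: e_simple => e_sym e_irr; rewrite mxE.
under eq_bigr => i _ do rewrite mxE enum_rankK -{1}(enum_valK i).
rewrite (sum_enum_val (fun x => rV_fun w x *
  (if x == y then (deg e x)%:R else if e x y then -1 else 0))).
rewrite (bigD1 y) //= eqxx mulrC.
congr (_ + _); rewrite -sumrN big_mkcond [RHS]big_mkcond /=.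
apply: eq_bigr => x _; rewrite e_sym; case: eqP => [-> | _] /=; first by rewrite e_irr.
by case: (e y x); rewrite ?mulrN1 ?mulr0 ?oppr0.
Qed.

Lemma laplacian_left_eigenP (w : 'rV[R]_#|T|) lam :
  w *m laplacian R e = lam *: w <-> lap_eigfun lam (rV_fun w).
Proof.
split=> [wL y | w_eig]; first by rewrite -row_mul_laplacian wL mxE.
apply/matrixP => i j; rewrite (ord1 i) -(enum_valK j) row_mul_laplacian w_eig.
by rewrite mxE.
Qed.

Lemma mulmx_rV_cV (w : 'rV[R]_#|T|) (x : 'cV[R]_#|T|) :
  (w *m x) 0 0 = \sum_y rV_fun w y * x (enum_rank y) 0.
Proof.
rewrite mxE -sum_enum_val; apply: eq_bigr => i _; by rewrite /rV_fun enum_valK.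
Qed.

Lemma eigproj_mul_eq0 (x : 'cV[R]_#|T|) lam :
  eigproj (laplacian R e) lam *m x = 0 <->
  forall g, lap_eigfun lam g -> \sum_y g y * x (enum_rank y) 0 = 0.
Proof.
have mx11_eq0 (M : 'M[R]_1) : M = 0 <-> M 0 0 = 0.
  by split=> [-> | M00]; [rewrite mxE | rewrite [M]mx11_scalar M00 raddf0].
rewrite /eigproj orth_proj_mul_eq0 mulmx_eq0_rowspace; split.
- move=> x_orth g g_eig; pose w : 'rV[R]_#|T| := \row_i g (enum_val i).
  have wg : rV_fun w =1 g by move=> y; rewrite /rV_fun mxE enum_rankK.
  have /mx11_eq0 : w *m x = 0.
    apply: x_orth; apply/eigenspaceP/laplacian_left_eigenP.
    by apply: lap_eigfun_ext g_eig => y; rewrite wg.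
  by rewrite mulmx_rV_cV => w_orth; rewrite -[RHS]w_orth; apply: eq_bigr => y _; rewrite wg.
- move=> x_orth w /eigenspaceP /laplacian_left_eigenP w_eig.
  by apply/mx11_eq0; rewrite mulmx_rV_cV; apply: x_orth.
Qed.

Lemma sum_mul_evec (h : T -> R) a : \sum_y h y * evec R a (enum_rank y) 0 = h a.
Proof.
rewrite (bigD1 a) //= mxE enum_rankK eqxx mulr1 big1 ?addr0 //.
by move=> y /negbTE; rewrite mxE enum_rankK => ->; rewrite mulr0.
Qed.

Lemma eig_supportNP u lam :
  ~ eig_support e u lam <-> forall g, lap_eigfun lam g -> g u = 0.
Proof.
rewrite /eig_support; set Eu := _ *m _.
have -> : ~ (Eu != 0) <-> Eu = 0 by split=> [/negP/negbNE/eqP | ->] //; rewrite eqxx.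
rewrite /Eu eigproj_mul_eq0.
by split=> u_null g /u_null; rewrite sum_mul_evec.
Qed.

Lemma strongly_cospectral_antisym a b mu : a != b ->
  lap_eigfun mu (fun x => (x == a)%:R - (x == b)%:R) ->
  strongly_cospectral R e a b <-> forall g, lap_eigfun mu g -> g a + g b = 0.
Proof.
move=> ab ab_eig; set L := laplacian R e; set ea := evec R a; set eb := evec R b.
have Lz : L *m (ea - eb) = mu *: (ea - eb).
  apply: trmx_inj; rewrite trmx_mul laplacian_sym linearZ /=.
  apply/laplacian_left_eigenP; apply: lap_eigfun_ext ab_eig => x.
  by rewrite /rV_fun !mxE enum_rankK.
have Ez lam := eigproj_mul_eigvec lam laplacian_sym Lz.
have z_neq0 : ea - eb != 0.
  apply/eqP => /matrixP/(_ (enum_rank a) 0)/eqP.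
  by rewrite !mxE enum_rankK eqxx (negbTE ab) subr0 oner_eq0.
have ea_supp : eigproj L mu *m ea != 0.
  apply/eqP => /eigproj_mul_eq0/(_ _ ab_eig)/eqP.
  by rewrite sum_mul_evec eqxx (negbTE ab) subr0 oner_eq0.
have sum_evecD (g : T -> R) :
    \sum_y g y * (ea + eb) (enum_rank y) 0 = g a + g b.
  rewrite -(sum_mul_evec g a) -(sum_mul_evec g b) -big_split /=.
  by apply: eq_bigr => y _; rewrite mxE mulrDr.
have -> : (forall g, lap_eigfun mu g -> g a + g b = 0) <->
          eigproj L mu *m (ea + eb) = 0.
  by rewrite eigproj_mul_eq0; split=> ab_null g /ab_null; rewrite sum_evecD.
split=> [/(_ mu ea_supp) [Eab | Eab] | Eab_null lam _].
- by move: (Ez mu) z_neq0; rewrite eqxx mulmxBr Eab subrr => <-; rewrite eqxx.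
- by rewrite mulmxDr Eab addNr.
have [-> | lam_mu] := eqVneq lam mu.
  by right; apply/eqP; rewrite -addr_eq0 -mulmxDr Eab_null.
by left; apply/eqP; rewrite -subr_eq0 -mulmxBr Ez (negbTE lam_mu).
Qed.

End Laplacian.

Definition adj_null (R : pzRingType) (T : finType) (e : rel T) (g : T -> R) :=
  forall y, \sum_(x | e y x) g x = 0.

Section RegularBlowup.
Variables (R : realFieldType) (T : finType) (e : rel T) (d : nat).
Hypotheses (e_simple : simple_graph e) (e_regular : regular e d).

Lemma regular_lap_eigfunP (g : T -> R) : lap_eigfun e d%:R g <-> adj_null e g.
Proof. by split=> g_eig y; have := g_eig y; rewrite e_regular; lra. Qed.

Lemma regular_eig_supportNP u :
  ~ eig_support e u (d%:R : R) <-> forall g : T -> R, adj_null e g -> g u = 0.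
Proof.
rewrite eig_supportNP //.
by split=> u_null g /regular_lap_eigfunP; apply: u_null.
Qed.

Lemma blowup2_simple : simple_graph (blowup2 e).
Proof. by case: e_simple => e_sym e_irr; split=> [x y | x]; [exact: e_sym | exact: e_irr]. Qed.

Lemma deg_blowup2 p : deg (blowup2 e) p = (2 * deg e p.2)%N.
Proof.
rewrite /deg.
have -> : [set q | blowup2 e p q] = setX [set: 'I_2] [set x | e p.2 x].
  by apply/setP => q; rewrite !inE.
by rewrite cardsX cardsT card_ord.
Qed.

Lemma sum_blowup2 (g : 'I_2 * T -> R) p :
  \sum_(q | blowup2 e p q) g q = \sum_(x | e p.2 x) (g (z0, x) + g (z1, x)).
Proof.
transitivity (\sum_(i : 'I_2) \sum_(x | e p.2 x) g (i, x)).
  by rewrite pair_big_dep /=; apply: eq_big => [[i x] | [i x] _].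
rewrite big_ord_recl big_ord1 -big_split /=.
by apply: eq_bigr => x _; congr (g (_, _) + g (_, _)); apply/val_inj.
Qed.

Lemma blowup2_lap_eigfunP (g : 'I_2 * T -> R) :
  lap_eigfun (blowup2 e) (2 * d)%N%:R g <->
  adj_null e (fun x => g (z0, x) + g (z1, x)).
Proof.
split=> [g_eig y | g_null p]; last by rewrite deg_blowup2 e_regular sum_blowup2 g_null; lra.
by have := g_eig (z0, y); rewrite deg_blowup2 e_regular sum_blowup2 /=; lra.
Qed.

Theorem blowup2_strongly_cospectralP u :
  strongly_cospectral R (blowup2 e) (z0, u) (z1, u) <->
  forall g : T -> R, adj_null e g -> g u = 0.
Proof.
rewrite (@strongly_cospectral_antisym _ _ _ blowup2_simple _ _ (2 * d)%N%:R) //; last first.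
  apply/blowup2_lap_eigfunP => y; rewrite big1 // => x _.
  by rewrite !xpair_eqE /= subr0 sub0r subrr.
split=> [u_null g g_null | u_null g /blowup2_lap_eigfunP /u_null //].
pose g2 (p : 'I_2 * T) := if p.1 == z0 then g p.2 else 0.
rewrite -[g u]addr0; apply: (u_null g2); apply/blowup2_lap_eigfunP => y.
by rewrite -[RHS](g_null y); apply: eq_bigr => x _; rewrite /g2 /= addr0.
Qed.

End RegularBlowup.

Section CompleteGraph.
Variables (R : realFieldType) (d : nat).

Lemma complete_graph_simple : simple_graph (@complete_graph d.+1).
Proof. by split=> [x y | x]; rewrite /complete_graph ?eqxx // eq_sym. Qed.

Lemma complete_graph_regular : regular (@complete_graph d.+1) d.
Proof.
move=> i; rewrite /deg.
have -> : [set j | complete_graph i j] = [set~ i].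
  by apply/setP => j; rewrite !inE /complete_graph eq_sym.
by rewrite cardsC1 card_ord.
Qed.

(* Every value of [g] equals [\sum_x g x], which is thus [0] once [d > 0]. *)
Lemma complete_adj_null_eq0 (g : 'I_d.+1 -> R) u :
  (0 < d)%N -> adj_null (@complete_graph d.+1) g -> g u = 0.
Proof.
move=> d_gt0 g_null; set S := \sum_x g x.
have gS y : g y = S.
  rewrite /S (bigD1 y) //= -[LHS]addr0; congr (_ + _).
  by rewrite -[LHS](g_null y); apply: eq_bigl => x; rewrite /complete_graph eq_sym.
have : S = S *+ d.+1.
  by rewrite {1}/S (eq_bigr (fun _ => S)) ?sumr_const ?card_ord.
rewrite mulrS -{1}[S]addr0 => /addrI/esym/eqP.
by rewrite mulrn_eq0 eqn0Ngt d_gt0 gS => /eqP.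
Qed.

End CompleteGraph.

Section CycleGraph.
Variables (R : realFieldType) (n : nat).
Hypothesis n_gt2 : (2 < n)%N.

Lemma cycle_graph_ordS (y x : 'I_n) :
  cycle_graph y x = (x == ordS y) || (x == ord_pred y).
Proof.
rewrite /cycle_graph; congr orb.
have -> : (val y == (val x).+1 %% n)%N = (y == ordS x) by [].
by rewrite -(inj_eq (@ord_pred_inj n)) ordSK eq_sym.
Qed.

Lemma ordS_neq (y : 'I_n) : ordS y != y.
Proof.
rewrite -val_eqE /=; have [y1n | ny1] := ltnP y.+1 n; first by rewrite modn_small //; lia.
have E : y.+1 = n by move: (ltn_ord y); lia.
by rewrite E modnn; lia.
Qed.

Lemma ordS2_neq (y : 'I_n) : ordS (ordS y) != y.
Proof.
rewrite -val_eqE /= -addn1 modnDml addn1.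
have [y2n | ny2] := ltnP y.+2 n; first by rewrite modn_small //; lia.
have [E | E] : y.+2 = n \/ y.+2 = 1 + n by move: (ltn_ord y); lia.
  by rewrite E modnn; lia.
by rewrite E modnDr modn_small //; lia.
Qed.

Lemma ordS_neq_pred (y : 'I_n) : ordS y != ord_pred y.
Proof. by rewrite -(inj_eq (@ordS_inj n)) ord_predK ordS2_neq. Qed.

Lemma cycle_graph_simple : simple_graph (@cycle_graph n).
Proof.
split=> [x y | x]; first by rewrite /cycle_graph orbC.
rewrite cycle_graph_ordS eq_sym (negbTE (ordS_neq x)) /=.
by rewrite -(inj_eq (@ordS_inj n)) ord_predK (negbTE (ordS_neq x)).
Qed.

Lemma cycle_graph_regular : regular (@cycle_graph n) 2.
Proof.
move=> y; rewrite /deg.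
have -> : [set x | cycle_graph y x] = [set ordS y; ord_pred y].
  by apply/setP => x; rewrite !inE cycle_graph_ordS.
by rewrite cards2 ordS_neq_pred.
Qed.

Lemma sum_cycle_graph (g : 'I_n -> R) y :
  \sum_(x | cycle_graph y x) g x = g (ordS y) + g (ord_pred y).
Proof.
rewrite (eq_bigl (mem [set ordS y; ord_pred y])) => [|x].
  by rewrite big_setU1 ?big_set1 // inE ordS_neq_pred.
by rewrite !inE cycle_graph_ordS.
Qed.

Lemma val_iter_ordS (u : 'I_n) k : val (iter k (@ordS n) u) = ((u + k) %% n)%N.
Proof.
elim: k => [|k IHk] /=; first by rewrite addn0 modn_small.
by rewrite IHk -addn1 modnDml addn1 addnS.
Qed.

Lemma iter_ordS_mul (u : 'I_n) m : iter (m * n) (@ordS n) u = u.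
Proof. by apply/val_inj; rewrite val_iter_ordS addnC modnMDl modn_small. Qed.

(* Along the cycle, [h k := g (u + k)] satisfies [h (k + 2) = - h k], so
   [h (2 j) = (-1)^j h 0]; some [2 j] is a multiple of [n] with [j] odd
   exactly when [4] does not divide [n]. *)
Lemma cycle_adj_null_eq0 (g : 'I_n -> R) u :
  ~~ (4 %| n)%N -> adj_null (@cycle_graph n) g -> g u = 0.
Proof.
move=> n4 g_null; pose h k := g (iter k (@ordS n) u).
have h_rec k : h k.+2 = - h k.
  apply/eqP; rewrite -addr_eq0 -(g_null (iter k.+1 (@ordS n) u)) sum_cycle_graph.
  by rewrite /h /= ordSK.
have h_even j : h (2 * j)%N = (-1) ^+ j * h 0%N.
  elim: j => [|j IHj]; first by rewrite mul1r.
  by rewrite mulnS h_rec IHj exprS mulN1r mulNr.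
have h_period m : h (m * n)%N = g u by rewrite /h iter_ordS_mul.
have h0 : h 0%N = g u by [].
have [n_odd | n_even] := boolP (odd n).
  by have := h_even n; rewrite h_period h0 -signr_odd n_odd mulN1r; lra.
have /dvdnP [m n_2m] : (2 %| n)%N by rewrite dvdn2.
have m_odd : odd m.
  by move: n4; rewrite n_2m -[4%N]/(2 * 2)%N mulnC dvdn_pmul2l // dvdn2 negbK.
have := h_even m; rewrite mulnC -n_2m -[X in h X]mul1n h_period h0.
by rewrite -signr_odd m_odd mulN1r; lra.
Qed.

(* [quarter_cos k] is [cos (k pi / 2)]. *)
Definition quarter_cos (k : nat) : R := nth 0 [:: 1; 0; -1; 0] (k %% 4).

Lemma quarter_cos_add2 k : quarter_cos (k + 2) = - quarter_cos k.
Proof.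
rewrite /quarter_cos -modnDml.
by case: (k %% 4)%N (ltn_pmod k (isT : (0 < 4)%N)) => [|[|[|[|r]]]] //= _; rewrite ?opprK ?oppr0.
Qed.

Lemma cycle_adj_null_witness u :
  (4 %| n)%N -> exists2 g : 'I_n -> R, adj_null (@cycle_graph n) g & g u != 0.
Proof.
move=> n4; have n_ge4 : (4 <= n)%N by apply: dvdn_leq n4; lia.
have cos_modn a b : quarter_cos (a %% n + b) = quarter_cos (a + b).
  by rewrite /quarter_cos -modnDml modn_dvdm // modnDml.
exists (fun x : 'I_n => quarter_cos (x + (n - u))) => [y | ]; last first.
  by rewrite subnKC ?(ltnW (ltn_ord u)) // /quarter_cos (eqP n4) oner_eq0.
rewrite sum_cycle_graph /= !cos_modn.
have -> : ((y + n).-1 + (n - u) = (y.+1 + (n - u) + 2) + (n - 4))%N.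
  by move: (ltn_ord u); lia.
have cos_shift k : quarter_cos (k + (n - 4)) = quarter_cos k.
  by rewrite /quarter_cos -modnDmr (eqP (_ : 4 %| n - 4)%N) ?dvdn_sub ?addn0.
by rewrite cos_shift quarter_cos_add2 subrr.
Qed.

End CycleGraph.

Section Hypercube.
Variables (R : realFieldType) (d : nat).
Notation word := {ffun 'I_d -> bool}.

Definition flip (x : word) (i : 'I_d) : word :=
  [ffun j => if j == i then ~~ x j else x j].

Lemma flipK i : involutive (flip^~ i).
Proof. by move=> x; apply/ffunP => j; rewrite !ffunE; case: eqP; rewrite ?negbK. Qed.

Lemma flip_inj x : injective (flip x).
Proof.
move=> i j /ffunP/(_ i); rewrite !ffunE eqxx.
by case: eqP => // _; case: (x i).
Qed.

Lemma hypercube_flip y x : hypercube y x = (x \in [set flip y i | i in 'I_d]).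
Proof.
apply/idP/imsetP => [/cards1P [i /setP yx] | [i _ ->]].
  exists i => //; apply/ffunP => k; have := yx k; rewrite !inE ffunE.
  by case: (y k) (x k) (k == i) => [] [] [].
apply/cards1P; exists i; apply/setP => k; rewrite !inE ffunE.
by case: (y k) (k == i) => [] [].
Qed.

Lemma hypercube_simple : simple_graph (@hypercube d).
Proof.
split=> [x y | x]; rewrite /hypercube.
  by rewrite (eq_card (_ : _ =i [set i | y i != x i])) // => k; rewrite !inE eq_sym.
by rewrite (eq_card0 (_ : _ =i pred0)) // => k; rewrite !inE eqxx.
Qed.

Lemma hypercube_regular : regular (@hypercube d) d.
Proof.
move=> y; rewrite /deg (eq_card (_ : _ =i [set flip y i | i in 'I_d])) => [|x].
  by rewrite card_imset ?card_ord //; exact: flip_inj.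
by rewrite inE hypercube_flip.
Qed.

Lemma sum_hypercube (g : word -> R) y :
  \sum_(x | hypercube y x) g x = \sum_i g (flip y i).
Proof.
rewrite (eq_bigl (mem [set flip y i | i in 'I_d])) => [|x]; last exact: hypercube_flip.
by rewrite big_imset //= => i j _ _; apply: flip_inj.
Qed.

(* The characters [(-1)^(s . x)] of [(Z/2)^d] diagonalise the adjacency matrix
   of the hypercube, with eigenvalue [\sum_i (-1)^(s i) = d - 2 |s|]. *)
Definition cube_char (s x : word) : R := \prod_i (if s i && x i then -1 else 1).

Definition cube_char_eigval (s : word) : R := \sum_i (if s i then -1 else 1).

Lemma cube_char_flip s x i :
  cube_char s (flip x i) = (if s i then -1 else 1) * cube_char s x.
Proof.
rewrite /cube_char (bigD1 i) // [in RHS](bigD1 i) //= mulrA; congr (_ * _).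
  by rewrite ffunE eqxx; case: (s i); case: (x i); rewrite /= ?mulN1r ?opprK ?mulr1.
by apply: eq_bigr => j ji; rewrite ffunE (negbTE ji).
Qed.

Lemma cube_char_neq0 s x : cube_char s x != 0.
Proof. by apply/prodf_neq0 => i _; case: ifP; rewrite ?oppr_eq0 oner_eq0. Qed.

Lemma sum_cube_char_flip s y :
  \sum_i cube_char s (flip y i) = cube_char_eigval s * cube_char s y.
Proof. by rewrite mulr_suml; apply: eq_bigr => i _; apply: cube_char_flip. Qed.

Lemma cube_char_orth x u :
  \sum_s cube_char s x * cube_char s u = if x == u then 2 ^+ d else 0.
Proof.
pose F i (b : bool) : R := (if b && x i then -1 else 1) * (if b && u i then -1 else 1).
rewrite (eq_bigr (fun s : word => \prod_i F i (s i))) => [|s _]; last by rewrite -big_split.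
rewrite -bigA_distr_bigA /=; under eq_bigr => i _ do rewrite big_bool /=.
have [xu | xu] := eqVneq x u.
  subst u; rewrite (eq_bigr (fun _ => 2)) ?prodr_const ?card_ord // => i _.
  by rewrite /F; case: (x i) => /=; lra.
have [i xui] : exists i, x i != u i.
  by apply/existsP; apply: contraNT xu => /existsPn xu; apply/eqP/ffunP => i; apply/eqP/negPn.
rewrite (bigD1 i) //=; apply/eqP; rewrite mulf_eq0; apply/orP; left.
by move: xui; rewrite /F; case: (x i); case: (u i) => //= _; apply/eqP; lra.
Qed.

Lemma cube_char_eigval_odd s : odd d -> cube_char_eigval s != 0.
Proof.
move=> d_odd; apply/eqP => eigval0.
have : cube_char_eigval s + 2 * (\sum_i (s i : nat))%:R = d%:R.
  rewrite natr_sum mulr_sumr -big_split /= -[in RHS](card_ord d) -sumr_const.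
  by apply: eq_bigr => i _; case: (s i) => /=; lra.
rewrite eigval0 add0r -natrM => /eqP; rewrite eqr_nat => /eqP d_even.
by move: d_odd; rewrite -d_even oddM.
Qed.

Lemma cube_char_eigval_alternating : ~~ odd d ->
  cube_char_eigval [ffun i : 'I_d => odd i] = 0.
Proof.
move=> d_even; rewrite /cube_char_eigval.
under eq_bigr => i _ do rewrite ffunE.
rewrite -(big_mkord xpredT (fun i => if odd i then -1 else 1)).
rewrite -[d]odd_double_half (negbTE d_even) add0n -mul2n.
elim: d./2 => [|k IHk]; first by rewrite big_geq.
by rewrite mulnS !big_nat_recr //= IHk oddM /= add0r addrN.
Qed.

Lemma cube_char_transform_adj_null (g : word -> R) s :
  adj_null (@hypercube d) g -> cube_char_eigval s * \sum_x g x * cube_char s x = 0.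
Proof.
move=> g_null.
have flip_sum0 : \sum_y (\sum_i g (flip y i)) * cube_char s y = 0.
  by apply: big1 => y _; rewrite -sum_hypercube g_null mul0r.
rewrite -[RHS]flip_sum0 mulr_sumr.
under [RHS]eq_bigr => y _ do rewrite mulr_suml.
rewrite [RHS]exchange_big /=.
under [RHS]eq_bigr => i _ do rewrite (reindex_inj (can_inj (flipK i))) /=.
rewrite [RHS]exchange_big /=; apply: eq_bigr => x _.
under [RHS]eq_bigr => i _ do rewrite flipK.
by rewrite -mulr_sumr sum_cube_char_flip mulrCA.
Qed.

Lemma cube_char_inversion (g : word -> R) u :
  \sum_s (\sum_x g x * cube_char s x) * cube_char s u = 2 ^+ d * g u.
Proof.
under eq_bigr => s _ do rewrite mulr_suml.
rewrite exchange_big /=.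
under eq_bigr => x _ do
  (under eq_bigr => s _ do rewrite -mulrA; rewrite -mulr_sumr cube_char_orth).
rewrite (bigD1 u) //= eqxx big1 ?addr0 1?mulrC // => x /negbTE ->.
by rewrite mulr0.
Qed.

Lemma hypercube_adj_null_eq0 (g : word -> R) u :
  odd d -> adj_null (@hypercube d) g -> g u = 0.
Proof.
move=> d_odd g_null; have := cube_char_inversion g u.
rewrite big1 => [/esym/eqP | s _].
  by rewrite mulf_eq0 expf_eq0 pnatr_eq0 andbF => /eqP.
have /eqP := cube_char_transform_adj_null s g_null.
by rewrite mulf_eq0 (negbTE (cube_char_eigval_odd s d_odd)) => /eqP ->; rewrite mul0r.
Qed.

Lemma hypercube_adj_null_witness u : ~~ odd d ->
  exists2 g : word -> R, adj_null (@hypercube d) g & g u != 0.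
Proof.
move=> d_even; exists (cube_char [ffun i : 'I_d => odd i]); last exact: cube_char_neq0.
by move=> y; rewrite sum_hypercube sum_cube_char_flip cube_char_eigval_alternating ?mul0r.
Qed.

End Hypercube.

Theorem corollary3 (R : rcfType) :
  (forall (T : finType) (e : rel T) (d : nat) (u : T),
      simple_graph e -> regular e d ->
      (strongly_cospectral R (blowup2 e) (z0, u) (z1, u) <->
       ~ eig_support e u (d%:R : R)))
  /\ (forall (d : nat) (u : 'I_d.+1), (1 <= d)%N ->
      strongly_cospectral R (blowup2 (@complete_graph d.+1)) (z0, u) (z1, u))
  /\ (forall (n : nat) (u : 'I_n), (3 <= n)%N ->
      (strongly_cospectral R (blowup2 (@cycle_graph n)) (z0, u) (z1, u) <->
       ~~ (4 %| n)%N))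
  /\ (forall (d : nat) (u : {ffun 'I_d -> bool}),
      (strongly_cospectral R (blowup2 (@hypercube d)) (z0, u) (z1, u) <->
       odd d)).
Proof.
split; [|split; [|split]].
- move=> T e d u e_simple e_regular.
  by rewrite blowup2_strongly_cospectralP // regular_eig_supportNP.
- move=> d u d_gt0.
  apply: (blowup2_strongly_cospectralP R (complete_graph_simple d) (@complete_graph_regular d) u).2.
  by move=> g; apply: complete_adj_null_eq0.
- move=> n u n_gt2.
  rewrite (blowup2_strongly_cospectralP R (cycle_graph_simple n_gt2) (cycle_graph_regular n_gt2)).
  split=> [u_null | n4 g]; last exact: cycle_adj_null_eq0.
  apply/negP => /(cycle_adj_null_witness R n_gt2 u) [g /u_null ->].
  by rewrite eqxx.
- move=> d u; rewrite (blowup2_strongly_cospectralP R (hypercube_simple d) (@hypercube_regular d)).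
  split=> [u_null | d_odd g]; last exact: hypercube_adj_null_eq0.
  apply/negPn/negP => /(hypercube_adj_null_witness R u) [g /u_null ->].
  by rewrite eqxx.
Qed.
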